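(* Suppose that $\mathfrak{F}$ is a 2-recognizable formation and let $G$ be a finite group. If $\mathcal{I}_\mathfrak{F}(G)$ is a subgroup of $G$ and $G=\mathcal{I}_\mathfrak{F}(G)\langle g\rangle$ for some $g\in G$, then $G\in\mathfrak{F}$.
   Context: A formation is a class of finite groups closed under homomorphic images and subdirect products. $\mathfrak{F}$ is 2-recognizable if a finite group belongs to $\mathfrak{F}$ whenever all its 2-generated subgroups belong to $\mathfrak{F}$. $\mathcal{I}_\mathfrak{F}(G)$ is the set of $x\in G$ such that $\langle x,y\rangle\in\mathfrak{F}$ for all $y\in G$. *)

From mathcomp Require Import all_boot all_fingroup.
Set Implicit Arguments. Unset Strict Implicit. Unset Printing Implicit Defensive.
Local Open Scope group_scope.

Definition group_class := forall gT : finGroupType, {group gT} -> Prop.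

(* Formation: closed under homomorphic images (hence isomorphisms) and
   subdirect products (G/N1, G/N2 in F with N1 :&: N2 = 1 implies G in F). *)
Definition formation (F : group_class) : Prop :=
  (forall (gT rT : finGroupType) (G : {group gT}) (f : {morphism G >-> rT}),
      F gT G -> F rT (f @* G)%G) /\
  (forall (gT : finGroupType) (G N1 N2 : {group gT}),
      N1 <| G -> N2 <| G -> N1 :&: N2 = 1 ->
      F _ (G / N1)%G -> F _ (G / N2)%G -> F gT G).

Definition two_recognizable (F : group_class) : Prop :=
  forall (gT : finGroupType) (G : {group gT}),
    (forall x y, x \in G -> y \in G -> F gT <<[set x; y]>>%G) -> F gT G.

Definition in_IF (F : group_class) (gT : finGroupType) (G : {group gT}) (x : gT) : Prop :=
  x \in G /\ forall y, y \in G -> F gT <<[set x; y]>>%G.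

From mathcomp Require Import all_boot all_fingroup.
Local Open Scope group_scope.

(* Since F is closed
   under conjugation, I = I_F(G) is normal in G, and G/I is cyclic, generated
   by the coset of g.  For x, y in G write xI = (gI)^i and yI = (gI)^j.  As
   <x, y> = <x, y x^-1> and (y x^-1)I = (gI)^(j-i), Euclid's algorithm on
   (i, j) reaches a generating pair with an element in I, and every such pair
   generates a group in F.  Hence all 2-generated subgroups of G lie in F. *)

Definition hom_closed (F : group_class) : Prop :=
  forall (gT rT : finGroupType) (G : {group gT}) (f : {morphism G >-> rT}),
    F gT G -> F rT (f @* G)%G.

Lemma formation_hom_closed {F : group_class} : formation F -> hom_closed F.
Proof. by case. Qed.

Section GroupClass.

Context {F : group_class} {gT : finGroupType}.

Lemma group_class_eq (H K : {group gT}) : H :=: K -> F gT H -> F gT K.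
Proof. by move=> eHK; have -> : H = K by apply: val_inj. Qed.

Lemma hom_closed_conj (H : {group gT}) (c : gT) :
  hom_closed F -> F gT H -> F gT (H :^ c)%G.
Proof.
move=> homF /(homF _ _ _ (conjgm_morphism H c)).
by apply: group_class_eq; rewrite /= morphim_conj setIid.
Qed.

Lemma in_IF_conj (G : {group gT}) (x c : gT) :
  hom_closed F -> c \in G -> in_IF F G x -> in_IF F G (x ^ c).
Proof.
move=> homF Gc [Gx FxG]; split=> [|y Gy]; first exact: groupJ.
have /(hom_closed_conj _ c homF) := FxG _ (groupJ Gy (groupVr Gc)).
apply: group_class_eq => /=.
by rewrite -genJ conjUg !conjg_set1 conjgKV.
Qed.

Lemma IF_normal {G I : {group gT}} :
  hom_closed F -> (forall x, x \in I <-> in_IF F G x) -> G \subset 'N(I).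
Proof.
move=> homF hI; apply/subsetP=> c Gc; rewrite inE sub_conjg.
apply/subsetP=> z /hI Iz; rewrite mem_conjg invgK.
exact/hI/in_IF_conj.
Qed.

End GroupClass.

Lemma gen_set2C (gT : finGroupType) (x y : gT) :
  <<[set x; y]>> = <<[set y; x]>>.
Proof. by rewrite setUC. Qed.

Lemma gen_set2_mulVr (gT : finGroupType) (x y : gT) :
  <<[set x; y * x^-1]>> = <<[set x; y]>>.
Proof.
have Xx z : x \in <<[set x; z]>> by rewrite mem_gen ?set21.
apply/eqP; rewrite eqEsubset !gen_subG !subUset !sub1set !Xx /=.
have Xy z : z \in <<[set x; z]>> by rewrite mem_gen ?set22.
by rewrite groupM ?groupV ?Xx ?Xy //= -{1}(mulgKV x y) groupM ?Xx ?Xy.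
Qed.

Section EuclidDescent.

Variables (gT : finGroupType) (G I : {group gT}) (g : gT).
Variable P : gT -> gT -> Prop.

Hypothesis nIG : G \subset 'N(I).
Hypothesis P_I : forall x y, x \in I -> y \in G -> P x y.
Hypothesis P_sym : forall x y, P x y -> P y x.
Hypothesis P_mulVr : forall x y, P x (y * x^-1) -> P x y.

Definition coset_power i x := x \in G /\ coset I x = coset I g ^+ i.

Lemma coset_power_mulVr x y i j : i <= j ->
  coset_power i x -> coset_power j y -> coset_power (j - i) (y * x^-1).
Proof.
move=> le_ij [Gx cx] [Gy cy]; split; first by rewrite groupM ?groupV.
by rewrite morphM ?morphV ?groupV ?(subsetP nIG) //= cx cy expgnFr.
Qed.

Lemma coset_power0 x y : coset_power 0 x -> y \in G -> P x y.
Proof. by case=> Gx cx; apply: P_I; apply: coset_idr; rewrite ?cx ?(subsetP nIG). Qed.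

Lemma euclid_descent {n i j x y} : i + j <= n ->
  coset_power i x -> coset_power j y -> P x y.
Proof.
elim: n => [|n IHn] in i j x y *.
  by case: i => // _ Xx [Gy _]; apply: coset_power0 Gy.
wlog le_ij : i j x y / i <= j.
  move=> wlog_le; case: (leqP i j) => [le_ij | /ltnW le_ji]; first exact: wlog_le.
  by rewrite addnC => sz_ji Xx Yy; apply/P_sym; exact: (wlog_le j i y x).
move=> sz_ij Xx Yy; case: i => [|i] in le_ij sz_ij Xx *.
  exact: coset_power0 (proj1 Yy).
apply/P_mulVr/(IHn i.+1 (j - i.+1)) => //; last exact: coset_power_mulVr.
by rewrite subnKC // -ltnS (leq_trans _ sz_ij) // ltnS leq_addl.
Qed.

Lemma coset_power_exists x : G :=: I * <[g]> -> g \in 'N(I) -> x \in G ->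
  exists i, coset_power i x.
Proof.
move=> defG nIg Gx; suff [i cx] : exists i, coset I x = coset I g ^+ i by exists i.
move: Gx; rewrite defG => /mulsgP[a _ Ia /cycleP[i ->] ->].
have nIa : a \in 'N(I) := subsetP (normG I) a Ia.
by exists i; rewrite morphM ?groupX //= (coset_id Ia) mul1g morphX.
Qed.

Lemma pairs_of_cyclic_quotient : G :=: I * <[g]> -> g \in 'N(I) ->
  forall x y, x \in G -> y \in G -> P x y.
Proof.
move=> defG nIg x y Gx Gy.
have [i Xx] := coset_power_exists x defG nIg Gx.
have [j Yy] := coset_power_exists y defG nIg Gy.
exact: (euclid_descent (leqnn _) Xx Yy).
Qed.

End EuclidDescent.

Theorem lemma4p1 (F : group_class) (hF : formation F) (h2 : two_recognizable F)
  (gT : finGroupType) (G : {group gT}) (I : {group gT})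
  (hI : forall x, x \in I <-> in_IF F G x)
  (g : gT) (hg : g \in G) (hG : G :=: I * <[g]>) :
  F gT G.
Proof.
have nIG : G \subset 'N(I) := IF_normal (formation_hom_closed hF) hI.
apply: h2; apply: (@pairs_of_cyclic_quotient _ G I g) => //.
- by move=> x y /hI[_ FxG]; apply: FxG.
- by move=> x y; apply: group_class_eq; rewrite /= gen_set2C.
- by move=> x y; apply: group_class_eq; rewrite /= gen_set2_mulVr.
- exact: (subsetP nIG).
Qed.
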